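(* For every command $C$ and every expectation $f$, \[ \mathsf{ect}[C](f) \;\le\; \mathsf{ect}[C](\mathbf{0}) + \mathsf{evt}[C](f) \] pointwise.
   Context: Let $\mathrm{Var}$ be a finite set of integer-valued variables and $\Sigma = \mathrm{Var}\to\mathbb{Z}$ the set of stores; $\sigma[x\mapsto i]$ is the store updated at $x$. Boolean expressions $\varphi$ are evaluated on stores ($\sigma\models\varphi$). A distribution expression $d$ assigns to each store $\sigma$ a probability distribution $d(\sigma)$ on $\mathbb{Z}$. Commands: $C,D ::= \mathtt{skip} \mid \mathtt{tick}(r) \mid \mathtt{halt} \mid x :\approx d \mid \mathtt{if}_{[\psi]}(\varphi)\{C\}\{D\} \mid \mathtt{while}_{[\psi]}(\varphi)\{C\} \mid C \,\square\, D \mid C \oplus_p D \mid C;D$, with $r$ a nonnegative rational, $p\in[0,1]$. Expectations are functions $f:\Sigma\to[0,\infty]$, ordered pointwise, with pointwise operations, $\mathbf{r}$ the constant $r$ (so $\mathbf{0}$ is the zero function), $[\varphi](\sigma)\in\{0,1\}$ the indicator, $[c]=1$ if $c=\mathit{true}$ and $0$ otherwise, $0\cdot\infty=0$. Transformer $\mathsf{et}_c$ for $c\in\{\mathit{true},\mathit{false}\}$: $\mathsf{et}_c[\mathtt{skip}](f)=f$; $\mathsf{et}_c[\mathtt{tick}(r)](f)=[c]\cdot\mathbf{r}+f$; $\mathsf{et}_c[\mathtt{halt}](f)=\mathbf{0}$; $\mathsf{et}_c[x:\approx d](f)=\lambda\sigma.\sum_{i} d(\sigma)(i)\, f(\sigma[x\mapsto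 i])$; $\mathsf{et}_c[\mathtt{if}_{[\psi]}(\varphi)\{C\}\{D\}](f)=[\psi\wedge\varphi]\cdot\mathsf{et}_c[C](f)+[\psi\wedge\neg\varphi]\cdot\mathsf{et}_c[D](f)$; $\mathsf{et}_c[\mathtt{while}_{[\psi]}(\varphi)\{C\}](f)=\mathrm{lfp}\,F.\ [\psi\wedge\varphi]\cdot\mathsf{et}_c[C](F)+[\psi\wedge\neg\varphi]\cdot f$ (least fixed point, pointwise order); $\mathsf{et}_c[C\,\square\,D](f)=\max(\mathsf{et}_c[C](f),\mathsf{et}_c[D](f))$; $\mathsf{et}_c[C\oplus_p D](f)=\mathbf{p}\cdot\mathsf{et}_c[C](f)+\mathbf{(1-p)}\cdot\mathsf{et}_c[D](f)$; $\mathsf{et}_c[C;D](f)=\mathsf{et}_c[C](\mathsf{et}_c[D](f))$. The expected cost transformer is $\mathsf{ect}[C]=\mathsf{et}_{\mathit{true}}[C]$ and the expected value transformer is $\mathsf{evt}[C]=\mathsf{et}_{\mathit{false}}[C]$. *)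

From HB Require Import structures.
From mathcomp Require Import all_boot all_order all_algebra.
From mathcomp Require Import all_classical all_reals.
From mathcomp Require Import ereal esum.
Set Implicit Arguments. Unset Strict Implicit. Unset Printing Implicit Defensive.
Import Order.TTheory GRing.Theory Num.Theory.
Local Open Scope classical_set_scope.
Local Open Scope ring_scope.

Section Lang.
Variable R : realType.
Variable Var : finType.

Definition store := Var -> int.
Definition upd (s : store) (x : Var) (i : int) : store :=
  fun y => if y == x then i else s y.

Definition bexp := store -> bool.

Record distr := Distr {
  pmf :> int -> R;
  pmf_ge0 : forall i, 0 <= pmf i;
  pmf_sum1 : (\esum_(i in [set: int]) (pmf i)%:E = 1)%E }.

Definition dexp := store -> distr.

Inductive cmd :=
| Skip
| Tick (r : rat) of (0 <= r)
| Halt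
| Sample (x : Var) (d : dexp)
| If (psi phi : bexp) (C D : cmd)
| While (psi phi : bexp) (C : cmd)
| NDet (C D : cmd)
| Prob (C D : cmd) (p : R) of (0 <= p <= 1)
| Seq (C D : cmd).

(* expectations: functions store -> [0, +oo]; represented in \bar R,
   nonnegativity is imposed where needed *)
Definition expt := store -> \bar R.

(* least fixed point in the complete lattice of nonnegative expectations
   (pointwise order): infimum of all pre-fixed points (Knaster-Tarski) *)
Definition lfp (Phi : expt -> expt) : expt :=
  fun s => ereal_inf [set G s | G in
    [set G : expt | (forall t, 0 <= G t)%E /\ (forall t, Phi G t <= G t)%E]].

Fixpoint et (c : bool) (C : cmd) (f : expt) : expt :=
  match C with
  | Skip => f
  | Tick r _ => fun s => ((if c then (ratr r : R) else 0)%:E + f s)%E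
  | Halt => fun _ => 0%E
  | Sample x d => fun s => \esum_(i in [set: int]) ((d s i)%:E * f (upd s x i))%E
  | If psi phi C1 D1 => fun s =>
      if psi s && phi s then et c C1 f s
      else if psi s && ~~ phi s then et c D1 f s else 0%E
  | While psi phi C1 =>
      lfp (fun F s => if psi s && phi s then et c C1 F s
                      else if psi s && ~~ phi s then f s else 0%E)
  | NDet C1 D1 => fun s => maxe (et c C1 f s) (et c D1 f s)
  | Prob C1 D1 p _ => fun s => (p%:E * et c C1 f s + (1 - p)%:E * et c D1 f s)%E
  | Seq C1 D1 => et c C1 (et c D1 f)
  end.

Definition ect := et true.
Definition evt := et false.
End Lang.

From mathcomp Require Import all_boot all_order all_algebra.
From mathcomp Require Import all_classical all_reals.
From mathcomp Require Import ereal esum.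
Set Implicit Arguments. Unset Strict Implicit. Unset Printing Implicit Defensive.
Local Open Scope ring_scope.
Local Open Scope ereal_scope.
Import Order.TTheory GRing.Theory Num.Theory.

(* We prove the stronger subadditivity [ect C (g + f) <= ect C g + evt C f]
   for all nonnegative g and f by induction on C; the theorem is the case
   g = 0.  Ticks are the only place where the two transformers differ, and
   there the cost is counted once on each side.  Sampling and probabilistic
   choice are linear, a maximum of sums is at most the sum of maxima, and
   sequential composition follows from monotonicity.  For a loop, the sum of
   the least fixed points for g and for f is a pre-fixed point of the loop
   functional for g + f, so it bounds the least fixed point of the latter. *)

Section LeastFixedPoint.
Variables (R : realType) (Var : finType).
Local Notation expt := (expt R Var).
Implicit Types (Phi : expt -> expt) (F G : expt).

Definition expt_ge0 F := forall s, 0 <= F s.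

(* Monotonicity is only required on nonnegative arguments, the domain of [lfp]. *)
Definition nondecreasing_expt Phi :=
  forall F G, expt_ge0 F -> (forall s, F s <= G s) -> forall s, Phi F s <= Phi G s.

Lemma lfp_ge0 Phi : expt_ge0 (lfp Phi).
Proof. by move=> s; apply/ereal_infP => _ [G [G0 _] <-]. Qed.

Lemma lfp_le_prefixed Phi G :
  expt_ge0 G -> (forall s, Phi G s <= G s) -> forall s, lfp Phi s <= G s.
Proof. by move=> G0 PhiG s; apply: ge_ereal_inf; exists (G s) => //; exists G. Qed.

Lemma lfp_prefixed Phi :
  nondecreasing_expt Phi -> forall s, Phi (lfp Phi) s <= lfp Phi s.
Proof.
move=> Phi_mono s; apply/ereal_infP => _ [G [G0 PhiG] <-].
apply: le_trans (PhiG s); apply: Phi_mono; first exact: lfp_ge0.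
exact: lfp_le_prefixed.
Qed.

Lemma lfp_le_lfp Phi Psi :
  nondecreasing_expt Psi -> (forall F, expt_ge0 F -> forall s, Phi F s <= Psi F s) ->
  forall s, lfp Phi s <= lfp Psi s.
Proof.
move=> Psi_mono PhiPsi; apply: lfp_le_prefixed => [|s]; first exact: lfp_ge0.
exact: le_trans (PhiPsi _ (lfp_ge0 _) s) (lfp_prefixed Psi_mono s).
Qed.

Definition while_step (body : expt -> expt) (psi phi : bexp Var) (f : expt) :
    expt -> expt :=
  fun F s => if psi s && phi s then body F s
             else if psi s && ~~ phi s then f s else 0.

Lemma while_step_mono body psi phi f :
  nondecreasing_expt body -> nondecreasing_expt (while_step body psi phi f).
Proof.
by move=> body_mono F G F0 FG s; rewrite /while_step; case: ifP => // _; apply: body_mono.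
Qed.

Lemma lfp_while_step_subadd (body body1 body2 : expt -> expt) psi phi g f :
    nondecreasing_expt body1 -> nondecreasing_expt body2 ->
    (forall F G, expt_ge0 F -> expt_ge0 G ->
       forall s, body (F \+ G) s <= body1 F s + body2 G s) ->
  forall s, lfp (while_step body psi phi (g \+ f)) s <=
    lfp (while_step body1 psi phi g) s + lfp (while_step body2 psi phi f) s.
Proof.
move=> mono1 mono2 body_subadd.
set A := lfp (while_step body1 _ _ _); set B := lfp (while_step body2 _ _ _).
have A0 : expt_ge0 A by exact: lfp_ge0.
have B0 : expt_ge0 B by exact: lfp_ge0.
apply: lfp_le_prefixed => [s|s]; first exact: adde_ge0.
have := lfp_prefixed (while_step_mono psi phi g mono1) s.
have := lfp_prefixed (while_step_mono psi phi f mono2) s.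
rewrite -/A -/B /while_step /=; case: ifP => _ => [B_pre A_pre|].
  by apply: le_trans (body_subadd _ _ A0 B0 s) _; apply: leeD.
by case: ifP => _ B_pre A_pre; [apply: leeD | apply: adde_ge0].
Qed.

End LeastFixedPoint.

Section Transformers.
Variables (R : realType) (Var : finType).
Local Notation expt := (expt R Var).
Local Notation cmd := (cmd R Var).
Implicit Types (C : cmd) (f g : expt).

Lemma prob_weights_ge0 (p : R) : (0 <= p <= 1)%R -> 0 <= p%:E /\ 0 <= (1 - p)%:E.
Proof. by move=> /andP[p0 p1]; rewrite !lee_fin subr_ge0. Qed.

Lemma et_ge0 c C f : expt_ge0 f -> expt_ge0 (et c C f).
Proof.
elim: C f => [|r r0||x d|psi phi C1 IH1 D1 IH2|psi phi C1 _|
  C1 IH1 D1 IH2|C1 IH1 D1 IH2 p /prob_weights_ge0[p0 q0]|C1 IH1 D1 IH2] f f0 s //=.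
- by apply: adde_ge0 => //; case: c; rewrite // lee_fin ler0q.
- by apply: esum_ge0 => i _; apply: mule_ge0; rewrite ?lee_fin ?pmf_ge0.
- by case: ifP => _; [apply: IH1 | case: ifP => _ //; apply: IH2].
- exact: lfp_ge0.
- by apply: le_trans (IH1 f f0 s) _; rewrite le_max lexx.
- by apply: adde_ge0; apply: mule_ge0 => //; [apply: IH1 | apply: IH2].
- by apply: IH1; apply: IH2.
Qed.

Lemma et_mono c C : nondecreasing_expt (et c C).
Proof.
elim: C => [|r r0||x d|psi phi C1 IH1 D1 IH2|psi phi C1 IH|
  C1 IH1 D1 IH2|C1 IH1 D1 IH2 p /prob_weights_ge0[p0 q0]|C1 IH1 D1 IH2] f g f0 fg s //=.
- exact: leeD2l.
- by apply: le_esum => i _; apply: lee_wpmul2l; rewrite ?lee_fin ?pmf_ge0.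
- by case: ifP => _; [apply: IH1 | case: ifP => _ //; apply: IH2].
- apply: lfp_le_lfp => [|F _ t]; first exact: while_step_mono.
  by rewrite /while_step; case: ifP => // _; case: ifP.
- by rewrite ge_max !le_max IH1 ?IH2 ?orbT.
- by apply: leeD; apply: lee_wpmul2l => //; [apply: IH1 | apply: IH2].
- by apply: IH1; [apply: et_ge0 | apply: IH2].
Qed.

Lemma ect_evt_subadd C g f : expt_ge0 g -> expt_ge0 f ->
  forall s, ect C (g \+ f) s <= ect C g s + evt C f s.
Proof.
rewrite /ect /evt; elim: C g f => [|r r0||x d|psi phi C1 IH1 D1 IH2|psi phi C1 IH|
  C1 IH1 D1 IH2|C1 IH1 D1 IH2 p hp|C1 IH1 D1 IH2] g f g0 f0 s /=.
- by [].
- by rewrite add0e addeA.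
- by rewrite adde0.
- have d0 i : 0 <= (d s i)%:E by rewrite lee_fin pmf_ge0.
  rewrite -esumD => [|i _|i _]; try exact: mule_ge0.
  by apply: le_esum => i _; rewrite ge0_muleDr.
- case: ifP => _; first exact: IH1.
  by case: ifP => _; [apply: IH2 | rewrite adde0].
- by apply: lfp_while_step_subadd => //; apply: et_mono.
- rewrite ge_max; apply/andP; split.
  + by apply: le_trans (IH1 _ _ g0 f0 s) _; apply: leeD; rewrite le_max lexx.
  + by apply: le_trans (IH2 _ _ g0 f0 s) _; apply: leeD; rewrite le_max lexx orbT.
- have [p0 q0] := prob_weights_ge0 hp.
  apply: (@le_trans _ _ (p%:E * (et true C1 g s + et false C1 f s) +
                         (1 - p)%:E * (et true D1 g s + et false D1 f s))).
    by apply: leeD; apply: lee_wpmul2l => //; [apply: IH1 | apply: IH2].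
  by rewrite !ge0_muleDr ?et_ge0 // addeACA.
- apply: le_trans (IH1 _ _ (et_ge0 _ _ g0) (et_ge0 _ _ f0) s).
  apply: et_mono => [t|t]; last exact: IH2.
  by apply: et_ge0 => u; apply: adde_ge0.
Qed.

End Transformers.

Theorem mainTheorem7 (R : realType) (Var : finType) (C : cmd R Var)
  (f : expt R Var) (f_ge0 : forall s, 0 <= f s) :
  forall s : store Var, ect C f s <= ect C (fun _ => 0) s + evt C f s.
Proof.
move=> s; have := ect_evt_subadd C (fun=> lexx 0) f_ge0 s.
by have -> : (fun _ => 0) \+ f = f by apply: funext => t; rewrite /= add0e.
Qed.
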